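(* Let $a,b>0$, $0<c<1$, $0<p<1$, and consider, with the fear parameter $q>0$ as bifurcation parameter, $$\frac{dx}{dt}=x\left[\frac{(1-x)(x-p)}{1+qy}-ay\right],\qquad \frac{dy}{dt}=by\,(1-y-cx).$$ Let $$q_*=\frac{a^2c^2+2acp+2ac+p^2-4a-2p+1}{4a(c^2p-cp-c+1)},$$ and assume $q_*>0$ and $2A_1+A_2>0$ at $q=q_*$, where $A_1=ac^2q+1$, $A_2=-(2acq+ac+p+1)$. Let $E_{3*}=(x_3,1-cx_3)$ with $x_3=-A_2/(2A_1)$ evaluated at $q=q_*$. Then the system undergoes a saddle-node bifurcation at $E_{3*}$ at the threshold $q=q_{SN}=q_*$ (the transversality conditions of Sotomayor's theorem for a saddle-node bifurcation hold).
   Context: At $q=q_*$ the discriminant $\Delta=A_2^2-4A_1A_3$ (with $A_3=a+aq+p$) vanishes, so the two interior equilibria $E_{1*},E_{2*}$ coalesce into $E_{3*}$. *)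

From Stdlib Require Import Reals.
From Coquelicot Require Import Coquelicot.
Open Scope R_scope.

Definition fx (a p : R) (q x y : R) : R :=
  x * ((1 - x) * (x - p) / (1 + q * y) - a * y).
Definition fy (b c : R) (q x y : R) : R :=
  b * y * (1 - y - c * x).

Section Soto.
Variables (f1 f2 : R -> R -> R -> R).

Definition J11 mu0 x0 y0 := Derive (fun x => f1 mu0 x y0) x0.
Definition J12 mu0 x0 y0 := Derive (fun y => f1 mu0 x0 y) y0.
Definition J21 mu0 x0 y0 := Derive (fun x => f2 mu0 x y0) x0.
Definition J22 mu0 x0 y0 := Derive (fun y => f2 mu0 x0 y) y0.

(* Second directional derivative D^2 f_i (x0,y0,mu0)(v,v) *)
Definition D2dir (f : R -> R -> R -> R) mu0 x0 y0 v1 v2 :=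
  Derive_n (fun t => f mu0 (x0 + t * v1) (y0 + t * v2)) 2 0.

(* Sotomayor's conditions for a saddle-node bifurcation of the family
   at the point (x0,y0) and parameter value mu0:
   (i)   (x0,y0) is an equilibrium at mu0;
   (ii)  the Jacobian A has 0 as a simple eigenvalue, i.e. 0 is a simple
         root of its characteristic polynomial  l^2 - tr(A) l + det(A)
         (det A = 0 and tr A <> 0), with right eigenvector v <> 0
         (A v = 0) and left eigenvector w <> 0 (w^T A = 0);
   (iii) w^T f_mu (x0,y0,mu0) <> 0;
   (iv)  w^T D^2 f (x0,y0,mu0)(v,v) <> 0.
   The derivatives involved are required to exist. *)
Definition sotomayor_saddle_node (mu0 x0 y0 : R) : Prop :=
  f1 mu0 x0 y0 = 0 /\ f2 mu0 x0 y0 = 0 /\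
  ex_derive (fun x => f1 mu0 x y0) x0 /\ ex_derive (fun y => f1 mu0 x0 y) y0 /\
  ex_derive (fun x => f2 mu0 x y0) x0 /\ ex_derive (fun y => f2 mu0 x0 y) y0 /\
  ex_derive (fun mu => f1 mu x0 y0) mu0 /\ ex_derive (fun mu => f2 mu x0 y0) mu0 /\
  J11 mu0 x0 y0 * J22 mu0 x0 y0 - J12 mu0 x0 y0 * J21 mu0 x0 y0 = 0 /\
  J11 mu0 x0 y0 + J22 mu0 x0 y0 <> 0 /\
  exists v1 v2 w1 w2 : R,
    (v1 <> 0 \/ v2 <> 0) /\ (w1 <> 0 \/ w2 <> 0) /\
    J11 mu0 x0 y0 * v1 + J12 mu0 x0 y0 * v2 = 0 /\
    J21 mu0 x0 y0 * v1 + J22 mu0 x0 y0 * v2 = 0 /\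
    w1 * J11 mu0 x0 y0 + w2 * J21 mu0 x0 y0 = 0 /\
    w1 * J12 mu0 x0 y0 + w2 * J22 mu0 x0 y0 = 0 /\
    w1 * Derive (fun mu => f1 mu x0 y0) mu0
      + w2 * Derive (fun mu => f2 mu x0 y0) mu0 <> 0 /\
    ex_derive_n (fun t => f1 mu0 (x0 + t * v1) (y0 + t * v2)) 2 0 /\
    ex_derive_n (fun t => f2 mu0 (x0 + t * v1) (y0 + t * v2)) 2 0 /\
    w1 * D2dir f1 mu0 x0 y0 v1 v2 + w2 * D2dir f2 mu0 x0 y0 v1 v2 <> 0.
End Soto.

Definition qstar (a c p : R) : R :=
  (a^2 * c^2 + 2 * a * c * p + 2 * a * c + p^2 - 4 * a - 2 * p + 1)
  / (4 * a * (c^2 * p - c * p - c + 1)).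
Definition cA1 (a c q : R) : R := a * c^2 * q + 1.
Definition cA2 (a c p q : R) : R := - (2 * a * c * q + a * c + p + 1).
Definition cA3 (a p q : R) : R := a + a * q + p.
Definition x3 (a c p : R) : R :=
  - cA2 a c p (qstar a c p) / (2 * cA1 a c (qstar a c p)).

From Stdlib Require Import Reals Lra Psatz.
From Coquelicot Require Import Coquelicot.
Open Scope R_scope.

(* Interior equilibria lie on the predator nullcline y = 1 - c x, where the
   prey nullcline reduces to the quadratic A1 x^2 + A2 x + A3 = 0.  At q = q*
   its discriminant vanishes, so x3 = -A2/(2 A1) is a double root; then along
   the tangent direction v = (1, -c) the prey numerator equals -A1 t^2.
   The file proceeds in three layers:
   1. generic calculus: a second-derivative criterion, and a Sotomayor
      criterion for a planar family whose Jacobian has rank one with rows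
      proportional to (c, 1) (then v = (1,-c) and w = (m,-k) are the kernels);
   2. the model at an arbitrary double-root equilibrium (x, 1 - c x) with
      0 < x < 1: partial derivatives, Jacobian, and the transversality
      quantities, which are explicit positive expressions;
   3. the threshold q*: zero discriminant, so x3 is a double root in (0,1). *)

Lemma second_derivative_at_0 (F F' : R -> R) (l eps : R) : 0 < eps ->
  (forall t, Rabs t < eps -> is_derive F t (F' t)) -> is_derive F' 0 l ->
  ex_derive_n F 2 0 /\ Derive_n F 2 0 = l.
Proof.
  intros Heps HF HF'.
  assert (Hloc : locally 0 (fun t => F' t = Derive F t)).
  { exists (mkposreal eps Heps). intros t Ht.
    change (Rabs (t - 0) < eps) in Ht. rewrite Rminus_0_r in Ht.
    symmetry. apply is_derive_unique, HF, Ht. }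
  split.
  - change (ex_derive (Derive F) 0).
    apply (ex_derive_ext_loc F'); [exact Hloc | eexists; exact HF'].
  - change (Derive (Derive F) 0 = l).
    rewrite <- (Derive_ext_loc F' _ _ Hloc). apply is_derive_unique, HF'.
Qed.

(* Sotomayor's saddle-node criterion for a rank-one Jacobian
   A = [[c k, k], [c m, m]]: det A = 0 automatically, the trace is c k + m,
   v = (1, -c) spans ker A and w = (m, -k) spans ker A^T. *)
Lemma saddle_node_of_rank_one_jacobian (f1 f2 : R -> R -> R -> R)
    (mu0 x0 y0 c k m F1 F2 S1 S2 : R) :
  f1 mu0 x0 y0 = 0 -> f2 mu0 x0 y0 = 0 ->
  is_derive (fun x => f1 mu0 x y0) x0 (c * k) ->
  is_derive (fun y => f1 mu0 x0 y) y0 k ->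
  is_derive (fun x => f2 mu0 x y0) x0 (c * m) ->
  is_derive (fun y => f2 mu0 x0 y) y0 m ->
  is_derive (fun mu => f1 mu x0 y0) mu0 F1 ->
  is_derive (fun mu => f2 mu x0 y0) mu0 F2 ->
  ex_derive_n (fun t => f1 mu0 (x0 + t * 1) (y0 + t * - c)) 2 0 ->
  Derive_n (fun t => f1 mu0 (x0 + t * 1) (y0 + t * - c)) 2 0 = S1 ->
  ex_derive_n (fun t => f2 mu0 (x0 + t * 1) (y0 + t * - c)) 2 0 ->
  Derive_n (fun t => f2 mu0 (x0 + t * 1) (y0 + t * - c)) 2 0 = S2 ->
  c * k + m <> 0 -> m * F1 - k * F2 <> 0 -> m * S1 - k * S2 <> 0 ->
  sotomayor_saddle_node f1 f2 mu0 x0 y0.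
Proof.
  intros E1 E2 D11 D12 D21 D22 Dmu1 Dmu2 X1 V1 X2 V2 Htr Hmu Hquad.
  unfold sotomayor_saddle_node, J11, J12, J21, J22, D2dir.
  replace (Derive (fun x => f1 mu0 x y0) x0) with (c * k)
    by (symmetry; exact (is_derive_unique _ _ _ D11)).
  replace (Derive (fun y => f1 mu0 x0 y) y0) with k
    by (symmetry; exact (is_derive_unique _ _ _ D12)).
  replace (Derive (fun x => f2 mu0 x y0) x0) with (c * m)
    by (symmetry; exact (is_derive_unique _ _ _ D21)).
  replace (Derive (fun y => f2 mu0 x0 y) y0) with m
    by (symmetry; exact (is_derive_unique _ _ _ D22)).
  replace (Derive (fun mu => f1 mu x0 y0) mu0) with F1
    by (symmetry; exact (is_derive_unique _ _ _ Dmu1)).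
  replace (Derive (fun mu => f2 mu x0 y0) mu0) with F2
    by (symmetry; exact (is_derive_unique _ _ _ Dmu2)).
  (* w = (m, -k) is nonzero since the trace c k + m is. *)
  assert (Hkm : m <> 0 \/ - k <> 0).
  { destruct (Req_dec m 0); [right; intro; apply Htr; nra | left; assumption]. }
  repeat split; try assumption;
    try (eexists; eassumption); try ring; try lra.
  exists 1, (- c), m, (- k). rewrite V1, V2.
  repeat split; try assumption; try ring; try lra.
Qed.

Definition prey_rate (a p q x y : R) : R := (1 - x) * (x - p) / (1 + q * y) - a * y.

Lemma fx_dx (a p q x y : R) : 1 + q * y <> 0 ->
  is_derive (fun X => fx a p q X y) x
    (prey_rate a p q x y + x * ((1 + p - 2 * x) / (1 + q * y))).
Proof. intros Hd. unfold fx, prey_rate. auto_derive; [tauto | field; exact Hd]. Qed.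

Lemma fx_dy (a p q x y : R) : 1 + q * y <> 0 ->
  is_derive (fun Y => fx a p q x Y) y
    (- (x * ((1 - x) * (x - p) * q / (1 + q * y) ^ 2 + a))).
Proof. intros Hd. unfold fx. auto_derive; [tauto | field; exact Hd]. Qed.

Lemma fx_dq (a p q x y : R) : 1 + q * y <> 0 ->
  is_derive (fun Q => fx a p Q x y) q (- (x * ((1 - x) * (x - p)) * y / (1 + q * y) ^ 2)).
Proof. intros Hd. unfold fx. auto_derive; [tauto | field; exact Hd]. Qed.

Lemma fy_dx (b c q x y : R) : is_derive (fun X => fy b c q X y) x (- (b * c * y)).
Proof. unfold fy. auto_derive; [exact I | ring]. Qed.

Lemma fy_dy (b c q x y : R) :
  is_derive (fun Y => fy b c q x Y) y (b * (1 - 2 * y - c * x)).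
Proof. unfold fy. auto_derive; [exact I | ring]. Qed.

Lemma fy_dq (b c q x y : R) : is_derive (fun Q => fy b c Q x y) q 0.
Proof. unfold fy. auto_derive; [exact I | ring]. Qed.

(* On the predator nullcline, the numerator of the prey rate is minus the
   quadratic A1 X^2 + A2 X + A3 whose roots are the interior equilibria. *)
Lemma prey_numerator_on_nullcline (a c p q X : R) :
  (1 - X) * (X - p) - a * (1 - c * X) * (1 + q * (1 - c * X)) =
  - (cA1 a c q * X ^ 2 + cA2 a c p q * X + cA3 a p q).
Proof. unfold cA1, cA2, cA3. ring. Qed.

Lemma quadratic_at_double_root (A1 A2 A3 x t : R) :
  A2 + 2 * A1 * x = 0 -> A3 = A1 * x ^ 2 ->
  A1 * (x + t) ^ 2 + A2 * (x + t) + A3 = A1 * t ^ 2.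
Proof.
  intros Hroot Hval. rewrite Hval.
  transitivity ((A2 + 2 * A1 * x) * (x + t) + A1 * t ^ 2); [ring |].
  rewrite Hroot. ring.
Qed.

Lemma double_root_of_zero_discriminant (A1 A2 A3 : R) :
  A1 <> 0 -> A2 ^ 2 - 4 * A1 * A3 = 0 ->
  A2 + 2 * A1 * (- A2 / (2 * A1)) = 0 /\ A3 = A1 * (- A2 / (2 * A1)) ^ 2.
Proof.
  intros HA1 Hdisc. split.
  - field. exact HA1.
  - apply (Rmult_eq_reg_l (4 * A1)); [| lra].
    transitivity (A2 ^ 2); [lra | field; exact HA1].
Qed.

Lemma cA1_pos (a c q : R) : 0 < a -> 0 < c -> 0 < q -> 0 < cA1 a c q.
Proof.
  intros Ha Hc Hq. unfold cA1.
  assert (0 < a * c ^ 2 * q).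
  { apply Rmult_lt_0_compat; [apply Rmult_lt_0_compat; [lra | apply pow_lt; lra] | lra]. }
  lra.
Qed.

Lemma cA2_neg (a c p q : R) : 0 < a -> 0 < c -> 0 < p -> 0 < q -> cA2 a c p q < 0.
Proof.
  intros Ha Hc Hp Hq. unfold cA2.
  assert (0 < a * c) by (apply Rmult_lt_0_compat; lra).
  assert (0 < a * c * q) by (apply Rmult_lt_0_compat; lra).
  lra.
Qed.

Section DoubleRootEquilibrium.

Variables a b c p q x y : R.
Hypotheses (Ha : 0 < a) (Hb : 0 < b) (Hc : 0 < c) (Hc1 : c < 1) (Hq : 0 < q)
  (Hx : 0 < x) (Hx1 : x < 1).
Hypothesis Hline : y = 1 - c * x.
Hypothesis Hroot : cA2 a c p q + 2 * cA1 a c q * x = 0.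
Hypothesis Hval : cA3 a p q = cA1 a c q * x ^ 2.

Lemma y_pos : 0 < y.
Proof. rewrite Hline. nra. Qed.

Lemma fear_denominator_pos : 0 < 1 + q * y.
Proof. pose proof y_pos. nra. Qed.

Lemma prey_numerator_along_tangent (t : R) :
  (1 - (x + t)) * ((x + t) - p) - a * (y - c * t) * (1 + q * (y - c * t)) =
  - (cA1 a c q * t ^ 2).
Proof.
  replace (y - c * t) with (1 - c * (x + t)) by (rewrite Hline; ring).
  rewrite prey_numerator_on_nullcline, quadratic_at_double_root; auto.
Qed.

Lemma prey_numerator_zero : (1 - x) * (x - p) = a * y * (1 + q * y).
Proof.
  pose proof (prey_numerator_along_tangent 0) as H0.
  rewrite Rplus_0_r, Rmult_0_r, Rminus_0_r in H0. lra.
Qed.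

Lemma prey_rate_zero : prey_rate a p q x y = 0.
Proof.
  pose proof fear_denominator_pos.
  unfold prey_rate. rewrite prey_numerator_zero. field. lra.
Qed.

(* The double-root condition, rewritten as the slope of the prey numerator. *)
Lemma prey_slope : 1 + p - 2 * x = - (a * c * (1 + 2 * q * y)).
Proof. unfold cA1, cA2 in Hroot. rewrite Hline. lra. Qed.

(* The Jacobian has rows (c k, k) and (c m, m) with k, m < 0 below. *)
Let k := - (a * x * (1 + 2 * q * y) / (1 + q * y)).
Let m := - (b * y).

Lemma k_neg : k < 0.
Proof.
  pose proof y_pos; pose proof fear_denominator_pos. unfold k.
  assert (0 < a * x * (1 + 2 * q * y) / (1 + q * y)).
  { apply Rdiv_lt_0_compat; [apply Rmult_lt_0_compat; nra | lra]. }
  lra.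
Qed.

(* Restricted to the tangent line, the prey equation is
   -A1 t^2 (x + t) / (1 + q y - q c t), whose second derivative at 0 is
   -2 A1 x / (1 + q y). *)
Lemma prey_second_derivative_along_tangent :
  ex_derive_n (fun t => fx a p q (x + t * 1) (y + t * - c)) 2 0 /\
  Derive_n (fun t => fx a p q (x + t * 1) (y + t * - c)) 2 0
    = - (2 * cA1 a c q * x / (1 + q * y)).
Proof.
  pose proof fear_denominator_pos as Hd.
  set (d := 1 + q * y) in *. set (A1 := cA1 a c q).
  set (eps := d / (2 * (q * c))).
  assert (Heps : 0 < eps) by (apply Rdiv_lt_0_compat; nra).
  assert (Hball : forall t, Rabs t < eps -> 0 < d - q * c * t).
  { intros t Ht. apply Rabs_def2 in Ht.
    assert (q * c * eps = d / 2) by (unfold eps; field; nra). nra. }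
  set (G := fun t => - A1 * t ^ 2 * (x + t) / (d - q * c * t)).
  assert (Hloc : locally 0 (fun t => G t = fx a p q (x + t * 1) (y + t * - c))).
  { exists (mkposreal eps Heps). intros t Ht.
    change (Rabs (t - 0) < eps) in Ht. rewrite Rminus_0_r in Ht.
    specialize (Hball t Ht).
    pose proof (prey_numerator_along_tangent t) as Hnum.
    unfold G, fx, d in *.
    replace (y + t * - c) with (y - c * t) by ring. rewrite Rmult_1_r.
    transitivity ((x + t) * (((1 - (x + t)) * ((x + t) - p)
        - a * (y - c * t) * (1 + q * (y - c * t))) / (1 + q * y - q * c * t))).
    - rewrite Hnum. unfold A1. field. lra.
    - field. lra. }
  destruct (second_derivative_at_0 G
      (fun t => - A1 * ((2 * t * (x + t) + t ^ 2) * (d - q * c * t)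
                        + t ^ 2 * (x + t) * (q * c)) / (d - q * c * t) ^ 2)
      (- (2 * A1 * x / d)) eps Heps) as [Hex Hval2].
  { intros t Ht. specialize (Hball t Ht). unfold G.
    auto_derive; [intro; lra | field; intro; lra]. }
  { auto_derive; [intro; nra | field; lra]. }
  split.
  - exact (ex_derive_n_ext_loc G _ 2 0 Hloc Hex).
  - rewrite <- Hval2. symmetry. apply Derive_n_ext_loc. exact Hloc.
Qed.

(* The predator equation vanishes identically on the nullcline y = 1 - c x. *)
Lemma predator_along_tangent (t : R) : fy b c q (x + t * 1) (y + t * - c) = 0.
Proof. unfold fy. rewrite Hline. ring. Qed.

Lemma saddle_node_at_double_root : sotomayor_saddle_node (fx a p) (fy b c) q x y.
Proof.
  pose proof y_pos as Hy; pose proof fear_denominator_pos as Hd.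
  pose proof k_neg as Hk; pose proof (cA1_pos a c q Ha Hc Hq) as HA1.
  pose proof prey_second_derivative_along_tangent as [Hex1 Hval1].
  apply (saddle_node_of_rank_one_jacobian _ _ q x y c k m
           (- (a * x * y ^ 2 / (1 + q * y))) 0
           (- (2 * cA1 a c q * x / (1 + q * y))) 0).
  - unfold fx. change (x * prey_rate a p q x y = 0). rewrite prey_rate_zero. ring.
  - unfold fy. rewrite Hline. ring.
  - replace (c * k) with (prey_rate a p q x y + x * ((1 + p - 2 * x) / (1 + q * y))).
    + apply fx_dx. lra.
    + rewrite prey_rate_zero, prey_slope. unfold k. field. lra.
  - replace k with (- (x * ((1 - x) * (x - p) * q / (1 + q * y) ^ 2 + a))).
    + apply fx_dy. lra.
    + rewrite prey_numerator_zero. unfold k. field. lra.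
  - replace (c * m) with (- (b * c * y)) by (unfold m; ring). apply fy_dx.
  - replace m with (b * (1 - 2 * y - c * x)) by (unfold m; rewrite Hline; ring).
    apply fy_dy.
  - replace (- (a * x * y ^ 2 / (1 + q * y)))
      with (- (x * ((1 - x) * (x - p)) * y / (1 + q * y) ^ 2)).
    + apply fx_dq. lra.
    + rewrite prey_numerator_zero. field. lra.
  - apply fy_dq.
  - exact Hex1.
  - exact Hval1.
  - apply (ex_derive_n_ext (fun _ => 0)); [| apply ex_derive_n_const].
    intro t. symmetry. apply predator_along_tangent.
  - rewrite (Derive_n_ext _ (fun _ => 0)); [apply Derive_n_const |].
    apply predator_along_tangent.
  - (* the trace c k + m is negative *)
    apply Rlt_not_eq. unfold m.
    assert (0 < c * - k) by (apply Rmult_lt_0_compat; lra).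
    assert (0 < b * y) by (apply Rmult_lt_0_compat; lra). lra.
  - (* w.f_q = a b x y^3 / (1 + q y) > 0 *)
    apply Rgt_not_eq. unfold m.
    assert (0 < b * y * (a * x * y ^ 2 / (1 + q * y))).
    { apply Rmult_lt_0_compat; [apply Rmult_lt_0_compat; lra |].
      apply Rdiv_lt_0_compat; [apply Rmult_lt_0_compat; [nra | apply pow_lt; lra] | lra]. }
    lra.
  - (* w.D^2 f(v,v) = 2 A1 b x y / (1 + q y) > 0 *)
    apply Rgt_not_eq. unfold m.
    assert (0 < b * y * (2 * cA1 a c q * x / (1 + q * y))).
    { apply Rmult_lt_0_compat; [apply Rmult_lt_0_compat; lra |].
      apply Rdiv_lt_0_compat; [nra | lra]. }
    lra.
Qed.

End DoubleRootEquilibrium.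

(* The discriminant A2^2 - 4 A1 A3 is affine in q and vanishes at q*. *)
Lemma discriminant_zero_at_qstar (a c p : R) :
  a <> 0 -> c ^ 2 * p - c * p - c + 1 <> 0 ->
  cA2 a c p (qstar a c p) ^ 2 - 4 * cA1 a c (qstar a c p) * cA3 a p (qstar a c p) = 0.
Proof. intros Ha Hden. unfold cA1, cA2, cA3, qstar. field. auto. Qed.

Lemma qstar_denominator_pos (c p : R) :
  0 < c < 1 -> 0 < p < 1 -> 0 < c ^ 2 * p - c * p - c + 1.
Proof.
  intros Hc Hp.
  replace (c ^ 2 * p - c * p - c + 1) with ((1 - c) * (1 - c * p)) by ring.
  apply Rmult_lt_0_compat; nra.
Qed.

Lemma double_root_in_unit_interval (A1 A2 : R) :
  0 < A1 -> A2 < 0 -> 0 < 2 * A1 + A2 -> 0 < - A2 / (2 * A1) < 1.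
Proof.
  intros HA1 HA2 Hsum. split.
  - apply Rdiv_lt_0_compat; lra.
  - apply (Rmult_lt_reg_r (2 * A1)); [lra |].
    unfold Rdiv. rewrite Rmult_assoc, Rinv_l; lra.
Qed.

Theorem theorem5p2 (a b c p : R) :
  0 < a -> 0 < b -> 0 < c < 1 -> 0 < p < 1 ->
  0 < qstar a c p ->
  0 < 2 * cA1 a c (qstar a c p) + cA2 a c p (qstar a c p) ->
  sotomayor_saddle_node (fx a p) (fy b c)
    (qstar a c p) (x3 a c p) (1 - c * x3 a c p).
Proof.
  intros Ha Hb Hc Hp Hq Hsum.
  pose proof (qstar_denominator_pos c p Hc Hp) as Hden.
  set (q := qstar a c p) in *.
  assert (HA1 : 0 < cA1 a c q) by (apply cA1_pos; tauto).
  assert (HA2 : cA2 a c p q < 0) by (apply cA2_neg; tauto).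
  destruct (double_root_of_zero_discriminant (cA1 a c q) (cA2 a c p q) (cA3 a p q))
    as [Hroot Hval].
  { apply Rgt_not_eq, HA1. }
  { apply discriminant_zero_at_qstar; apply Rgt_not_eq; assumption. }
  destruct (double_root_in_unit_interval _ _ HA1 HA2 Hsum) as [Hx Hx1].
  apply saddle_node_at_double_root; tauto.
Qed.
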